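(* Let $\tau,C_1,C_2>0$ and let $y\in C([-\tau,\infty))$ be a nonnegative function, differentiable on $(-\tau,0)$ and continuously differentiable on $(0,\infty)$, such that $$|\dot y(t)|\le C_1y(t)+C_2y(t-\tau)\qquad\text{for all }t>0.$$ Let $$M:=\max\Big\{\sup_{s\in(-\tau,0)}\frac{|\dot y(s)|}{y(s)},\ \frac{|\dot y(0^+)|}{y(0)}\Big\}<\infty,$$ where $\dot y(0^+)$ is the right derivative of $y$ at $0$. If there exists $\kappa>0$ with $$\kappa>\max\{M,\ C_1+C_2e^{\kappa\tau}\},$$ then for all $s,t>0$ with $-\tau<t-s$, $$e^{-\kappa s}y(t)<y(t-s)<e^{\kappa s}y(t).$$ *)

From Stdlib Require Import Reals.
From Coquelicot Require Import Coquelicot.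
Open Scope R_scope.

Definition Rbar_maxR (a : Rbar) (b : R) : Rbar :=
  match a with
  | Finite x => Finite (Rmax x b)
  | p_infty => p_infty
  | m_infty => Finite b
  end.

Definition sup_ratio (y : R -> R) (tau : R) : Rbar :=
  Lub_Rbar (fun r => exists s, -tau < s < 0 /\ r = Rabs (Derive y s) / y s).

(* M := max { sup_{s in (-tau,0)} |y'(s)|/y(s), |y'(0+)|/y(0) },
   where d is the right derivative of y at 0 *)
Definition Mconst (y : R -> R) (tau d : R) : Rbar :=
  Rbar_maxR (sup_ratio y tau) (Rabs d / y 0).

(* Call a point good when |y'| < kappa y there.  Points of (-tau, 0) are good because
   M < kappa, and on an interval of good points y e^(kappa u) increases while
   y e^(-kappa u) decreases, which is the claimed two-sided bound.  Goodness spreads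
   to (0, oo) by real induction: if every point of (-tau, t) but 0 is good, then
   y t > 0 and y (t - tau) <= e^(kappa tau) y t, so C2 y (t - tau) < (kappa - C1) y t
   because C1 + C2 e^(kappa tau) < kappa.  By continuity of y this strict inequality
   persists just to the right of the front t, where the delay inequality then gives
   |y'| <= C1 y + C2 y (. - tau) < kappa y. *)

From Stdlib Require Import Reals Lra Classical.
From Coquelicot Require Import Coquelicot.
Open Scope R_scope.

Lemma filter_le_within_subset {T : Type} (F : (T -> Prop) -> Prop) {FF : Filter F}
    (D D' : T -> Prop) :
  (forall u, D u -> D' u) -> filter_le (within D F) (within D' F).
Proof.
  intros HDD' P HP. apply (filter_imp _ _ (fun u HPu HDu => HPu (HDD' u HDu)) HP).
Qed.

Lemma filterlim_within_within (f : R -> R) (D D' : R -> Prop) t :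
  continuous f t -> (forall u, D u -> D' (f u)) ->
  filterlim f (within D (locally t)) (within D' (locally (f t))).
Proof.
  intros Hf HDD' P HP.
  apply (filter_imp _ _ (fun u HPu HDu => HPu (HDD' u HDu)) (Hf _ HP)).
Qed.

Lemma continuity_pt_of_within (g : R -> R) (D : R -> Prop) x :
  locally x D -> filterlim g (within D (locally x)) (locally (g x)) ->
  continuity_pt g x.
Proof.
  intros HD Hg. apply continuity_pt_filterlim. intros P HP.
  change (locally x (fun u => P (g u))).
  apply (filter_imp (fun u => D u /\ (D u -> P (g u)))).
  - intros u [HDu HPu]. exact (HPu HDu).
  - exact (filter_and _ _ HD (Hg P HP)).
Qed.

Lemma filter_lt_of_lim {T : Type} (F : (T -> Prop) -> Prop) {FF : Filter F}
    (f g : T -> R) lf lg a b :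
  0 < a -> 0 < b -> a * lf < b * lg ->
  filterlim f F (locally lf) -> filterlim g F (locally lg) ->
  F (fun x => a * f x < b * g x).
Proof.
  intros Ha Hb Hab Hf Hg.
  set (m := (a * lf + b * lg) / 2).
  assert (Hfm : F (fun x => f x < m / a)).
  { apply (Hf (fun u => u < m / a)), open_lt.
    apply Rmult_lt_reg_l with a; [lra|]. unfold m; field_simplify; lra. }
  assert (Hgm : F (fun x => m / b < g x)).
  { apply (Hg (fun u => m / b < u)), open_gt.
    apply Rmult_lt_reg_l with b; [lra|]. unfold m; field_simplify; lra. }
  apply filter_imp with (2 := filter_and _ _ Hfm Hgm). intros x [Hfx Hgx].
  apply Rlt_trans with m.
  - replace m with (a * (m / a)) by (field; lra). apply Rmult_lt_compat_l; lra.
  - replace m with (b * (m / b)) by (field; lra). apply Rmult_lt_compat_l; lra.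
Qed.

Lemma le_of_right_limit (g : R -> R) (D : R -> Prop) x b L :
  x < b -> (forall u, x < u -> D u) ->
  filterlim g (within D (locally x)) (locally (g x)) ->
  (forall u, x < u < b -> g u <= L) -> g x <= L.
Proof.
  intros Hxb HD Hg HL.
  assert (Hright : filterlim g (at_right x) (locally (g x))).
  { apply (filterlim_filter_le_1 _ (filter_le_within_subset _ _ _ HD) Hg). }
  assert (Hnear : at_right x (fun u => g u <= L)).
  { exists (mkposreal (b - x) ltac:(lra)). intros u Hu Hxu.
    apply HL. apply Rabs_lt_between' in Hu. simpl in Hu. lra. }
  change (Rbar_le (g x) L).
  apply (filterlim_le (F := at_right x) g (fun _ => L)); auto.
  apply filterlim_const.
Qed.

Lemma increasing_of_pos_derive (f df : R -> R) a b :
  a < b -> (forall x, a <= x <= b -> continuity_pt f x) ->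
  (forall x, a < x < b -> is_derive f x (df x) /\ 0 < df x) -> f a < f b.
Proof.
  intros Hab Hc Hd.
  pose (prf := fun c (Hc : a < c < b) =>
    exist (fun l => derivable_pt_abs f c l) (df c)
      (proj1 (is_derive_Reals f c (df c)) (proj1 (Hd c Hc)))).
  destruct (MVT f id a b prf (fun c _ => derivable_pt_id c) Hab Hc
     (fun c _ => derivable_continuous_pt _ _ (derivable_pt_id c))) as [c [Hcab Hmvt]].
  rewrite derive_pt_id in Hmvt. simpl in Hmvt. unfold id in Hmvt.
  destruct (Hd c Hcab) as [_ Hpos]. nra.
Qed.

Lemma increasing_of_pos_derive_except (f df : R -> R) p a b :
  a < b -> (forall x, a <= x <= b -> continuity_pt f x) ->
  (forall x, a < x < b -> x <> p -> is_derive f x (df x) /\ 0 < df x) -> f a < f b.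
Proof.
  intros Hab Hc Hd.
  destruct (Rlt_dec a p) as [Hap|Hap]; [destruct (Rlt_dec p b) as [Hpb|Hpb]|].
  - apply Rlt_trans with (f p);
      apply (increasing_of_pos_derive f df); try lra;
      intros; [apply Hc | apply Hd | apply Hc | apply Hd]; lra.
  - apply (increasing_of_pos_derive f df); auto. intros; apply Hd; lra.
  - apply (increasing_of_pos_derive f df); auto. intros; apply Hd; lra.
Qed.

Lemma exp_weighted_increasing (f df : R -> R) c p a b :
  a < b -> (forall x, a <= x <= b -> continuity_pt f x) ->
  (forall x, a < x < b -> x <> p -> is_derive f x (df x) /\ 0 < df x + c * f x) ->
  f a < exp (c * (b - a)) * f b.
Proof.
  intros Hab Hc Hd.
  assert (Hmono : f a * exp (c * (a - a)) < f b * exp (c * (b - a))).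
  { apply (increasing_of_pos_derive_except (fun u => f u * exp (c * (u - a)))
      (fun u => df u * exp (c * (u - a)) + f u * (c * exp (c * (u - a)))) p); auto.
    - intros x Hx. apply (continuity_pt_mult f (fun u => exp (c * (u - a)))); auto.
      apply continuity_pt_filterlim, (ex_derive_continuous (fun u => exp (c * (u - a)))).
      auto_derive. exact I.
    - intros x Hx Hxp. destruct (Hd x Hx Hxp) as [Hder Hpos]. split.
      + auto_derive; [exists (df x); exact Hder|].
        replace (Derive (fun u => f u) x) with (df x)
          by (symmetry; exact (is_derive_unique _ _ _ Hder)).
        unfold Rminus. ring.
      + assert (He := exp_pos (c * (x - a))). nra. }
  rewrite Rminus_eq_0, Rmult_0_r, exp_0 in Hmono. lra.
Qed.

Lemma pos_real_induction (P : R -> Prop) :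
  (forall t, 0 <= t -> (forall x, 0 < x < t -> P x) ->
     within (Rle t) (locally t) (fun x => 0 < x -> P x)) ->
  forall x, 0 < x -> P x.
Proof.
  intros Hstep x0 Hx0. apply NNPP. intros HnP.
  set (E := fun x => 0 < x /\ ~ P x).
  generalize (Glb_Rbar_correct E). destruct (Glb_Rbar E) as [t| |]; intros [Hlb Hglb].
  - assert (Ht0 : 0 <= t).
    { apply (Hglb 0). intros x [Hx _]. simpl. lra. }
    assert (Hbelow : forall x, 0 < x < t -> P x).
    { intros x Hx. apply NNPP. intros HnPx.
      assert (Htx := Hlb x (conj (proj1 Hx) HnPx)). simpl in Htx. lra. }
    destruct (Hstep t Ht0 Hbelow) as [delta Hdelta].
    assert (Hlb' : Rbar_le (t + delta) t).
    { apply Hglb. intros x [Hx HnPx]. simpl.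
      destruct (Rle_dec (t + delta) x) as [Hle|Hgt]; auto. exfalso.
      assert (Htx := Hlb x (conj Hx HnPx)). simpl in Htx.
      apply HnPx, Hdelta; auto. apply Rabs_lt_between'. lra. }
    simpl in Hlb'. assert (Hd := cond_pos delta). lra.
  - exact (Hlb x0 (conj Hx0 HnP)).
  - exact (Hglb 0 (fun x Hx => Rlt_le _ _ (proj1 Hx))).
Qed.

Lemma abs_derive_lt_of_Mconst_lt (y : R -> R) (tau d kappa x : R) :
  Rbar_lt (Mconst y tau d) (Finite kappa) -> -tau < x < 0 -> 0 < y x ->
  Rabs (Derive y x) < kappa * y x.
Proof.
  intros HkM Hx Hyx.
  set (E := fun r => exists s, -tau < s < 0 /\ r = Rabs (Derive y s) / y s).
  assert (Hub := proj1 (Lub_Rbar_correct E) _ (ex_intro _ x (conj Hx eq_refl))).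
  unfold Mconst, sup_ratio in HkM. fold E in HkM.
  destruct (Lub_Rbar E) as [m| |]; simpl in Hub, HkM; try contradiction.
  assert (Hm := Rmax_l m (Rabs d / y 0)).
  assert (Hratio : Rabs (Derive y x) / y x < kappa) by lra.
  apply Rmult_lt_reg_r with (/ y x); [apply Rinv_0_lt_compat; lra|].
  rewrite Rmult_assoc, Rinv_r, Rmult_1_r; [exact Hratio | lra].
Qed.

Section DelayGrowth.

Variables (tau C1 C2 kappa : R) (y : R -> R).
Hypothesis Htau : 0 < tau.
Hypothesis HC2 : 0 < C2.
Hypothesis Hkappa : 0 < kappa.
Hypothesis Hcont : forall t, -tau <= t ->
  filterlim y (within (fun x => -tau <= x) (locally t)) (locally (y t)).
Hypothesis Hnn : forall t, -tau <= t -> 0 <= y t.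
Hypothesis Hdiff : forall x, -tau < x -> x <> 0 -> ex_derive y x.
Hypothesis Hineq : forall t, 0 < t -> Rabs (Derive y t) <= C1 * y t + C2 * y (t - tau).
Hypothesis Hy0 : 0 < y 0.
Hypothesis HkC : C1 + C2 * exp (kappa * tau) < kappa.

Lemma growth_bounds a b : -tau < a < b ->
  (forall x, a < x < b -> x <> 0 -> Rabs (Derive y x) < kappa * y x) ->
  exp (- kappa * (b - a)) * y b < y a /\ y a < exp (kappa * (b - a)) * y b.
Proof.
  intros Hab Hgood.
  assert (Hc : forall x, a <= x <= b -> continuity_pt y x).
  { intros x Hx. apply (continuity_pt_of_within y (fun u => -tau <= u)).
    - exists (mkposreal (x + tau) ltac:(lra)). intros u Hu.
      apply Rabs_lt_between' in Hu. simpl in Hu. lra.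
    - apply Hcont. lra. }
  assert (Hd : forall x, a < x < b -> x <> 0 -> is_derive y x (Derive y x)).
  { intros x Hx Hx0. apply Derive_correct, Hdiff; lra. }
  split.
  - assert (Hlow : - y a < exp (- kappa * (b - a)) * - y b).
    { apply (exp_weighted_increasing (fun u => - y u) (fun u => - Derive y u) (- kappa) 0);
        [lra | |].
      - intros x Hx. apply continuity_pt_opp, Hc, Hx.
      - intros x Hx Hx0. split.
        + apply (is_derive_opp y), Hd; auto.
        + assert (Hr := Rle_abs (Derive y x)). specialize (Hgood x Hx Hx0). lra. }
    lra.
  - apply (exp_weighted_increasing y (Derive y) kappa 0); [lra | exact Hc |].
    intros x Hx Hx0. split; auto.
    assert (Hr := Rle_abs (- Derive y x)). rewrite Rabs_Ropp in Hr.
    specialize (Hgood x Hx Hx0). lra.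
Qed.

Section Front.

Variable t : R.
Hypothesis Ht : 0 <= t.
Hypothesis Hgood : forall x, -tau < x < t -> x <> 0 -> Rabs (Derive y x) < kappa * y x.

Lemma front_pos : 0 < y t.
Proof.
  destruct Ht as [Htpos | <-]; [|exact Hy0].
  destruct (growth_bounds 0 t) as [_ Hup]; [lra | intros; apply Hgood; lra |].
  assert (He := exp_pos (kappa * (t - 0))).
  assert (Hyt := Hnn t ltac:(lra)). nra.
Qed.

Lemma front_delayed_le : y (t - tau) <= exp (kappa * tau) * y t.
Proof.
  apply (le_of_right_limit y (fun u => -tau <= u) (t - tau) t);
    [lra | intros; lra | apply Hcont; lra |].
  intros u Hu.
  destruct (growth_bounds u t) as [_ Hup]; [lra | intros; apply Hgood; lra |].
  assert (Hexp : exp (kappa * (t - u)) <= exp (kappa * tau)).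
  { apply Rlt_le, exp_increasing. nra. }
  assert (Hyt := Hnn t ltac:(lra)). nra.
Qed.

Lemma abs_derive_lt_beyond_front :
  within (Rle t) (locally t) (fun x => 0 < x -> Rabs (Derive y x) < kappa * y x).
Proof.
  assert (Hgap : C2 * y (t - tau) < (kappa - C1) * y t).
  { assert (Hyt := front_pos). assert (Hdel := front_delayed_le).
    assert (C2 * y (t - tau) <= C2 * exp (kappa * tau) * y t) by nra. nra. }
  assert (Hnow : filterlim y (within (Rle t) (locally t)) (locally (y t))).
  { apply (filterlim_filter_le_1 _
      (filter_le_within_subset (locally t) (Rle t) (fun u => -tau <= u) ltac:(intros; lra))).
    apply Hcont. lra. }
  assert (Hdelayed : filterlim (fun x => y (x - tau)) (within (Rle t) (locally t))
                       (locally (y (t - tau)))).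
  { apply (filterlim_comp _ _ _ (fun x => x - tau) y _
             (within (fun u => -tau <= u) (locally (t - tau)))).
    - apply (filterlim_within_within (fun x => x - tau)); [|intros; lra].
      apply (ex_derive_continuous (fun x => x - tau)). auto_derive. exact I.
    - apply Hcont. lra. }
  assert (HC2e := exp_pos (kappa * tau)).
  apply filter_imp with (2 := filter_lt_of_lim (within (Rle t) (locally t)) _ _ _ _
                                C2 (kappa - C1) HC2 ltac:(nra) Hgap Hdelayed Hnow).
  intros x Hx Hx0. specialize (Hineq x Hx0). lra.
Qed.

End Front.

End DelayGrowth.

Theorem lemma3p5 (tau C1 C2 : R) (y : R -> R) (d kappa : R)
  (Htau : 0 < tau) (HC1 : 0 < C1) (HC2 : 0 < C2)
  (* y continuous on [-tau, oo) *)
  (Hcont : forall t, -tau <= t ->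
     filterlim y (within (fun x => -tau <= x) (locally t)) (locally (y t)))
  (* y nonnegative *)
  (Hnn : forall t, -tau <= t -> 0 <= y t)
  (* differentiable on (-tau,0) *)
  (Hdiff_neg : forall s, -tau < s < 0 -> ex_derive y s)
  (* continuously differentiable on (0,oo) *)
  (Hdiff_pos : forall t, 0 < t -> ex_derive y t)
  (Hcont_deriv : forall t, 0 < t -> continuous (Derive y) t)
  (* d is the right derivative of y at 0 *)
  (Hd : filterlim (fun h => (y h - y 0) / h) (at_right 0) (locally d))
  (* delay differential inequality *)
  (Hineq : forall t, 0 < t -> Rabs (Derive y t) <= C1 * y t + C2 * y (t - tau))
  (* M is well defined: the denominators y(s), s in (-tau,0], are nonzero *)
  (Hpos : forall s, -tau < s <= 0 -> 0 < y s)
  (* M < oo *)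
  (HMfin : Rbar_lt (Mconst y tau d) p_infty)
  (Hkappa : 0 < kappa)
  (HkM : Rbar_lt (Mconst y tau d) (Finite kappa))
  (HkC : C1 + C2 * exp (kappa * tau) < kappa) :
  forall s t, 0 < s -> 0 < t -> -tau < t - s ->
    exp (- kappa * s) * y t < y (t - s) /\ y (t - s) < exp (kappa * s) * y t.
Proof.
  assert (Hdiff : forall x, -tau < x -> x <> 0 -> ex_derive y x).
  { intros x Hx Hx0. destruct (Rlt_dec x 0).
    - apply Hdiff_neg; lra.
    - apply Hdiff_pos; lra. }
  assert (Hy0 : 0 < y 0) by (apply Hpos; lra).
  assert (Hgood_neg : forall x, -tau < x < 0 -> Rabs (Derive y x) < kappa * y x).
  { intros x Hx. apply (abs_derive_lt_of_Mconst_lt y tau d); auto. apply Hpos; lra. }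
  assert (Hgood_pos : forall x, 0 < x -> Rabs (Derive y x) < kappa * y x).
  { apply pos_real_induction. intros t Ht Hbelow.
    apply (abs_derive_lt_beyond_front tau C1 C2 kappa y); auto.
    intros x Hx Hx0. destruct (Rlt_dec x 0); [apply Hgood_neg | apply Hbelow]; lra. }
  intros s t Hs Ht Hts.
  destruct (growth_bounds tau kappa y Hcont Hdiff (t - s) t) as [Hlow Hup]; [lra| |].
  - intros x Hx Hx0. destruct (Rlt_dec x 0); [apply Hgood_neg | apply Hgood_pos]; lra.
  - replace (t - (t - s)) with s in Hlow, Hup by ring. split; assumption.
Qed.
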